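(* Let $n,k\in\mathbb{N}$ with $n\le k$, and let $a_1,\ldots,a_n\ge 0$ be real numbers such that $r:=\sum_{j=1}^n a_j>0$. Consider the (possibly degenerate) ellipsoid $$\mathcal{E}=\Big\{x=(x_1,\ldots,x_n)^t\in\mathbb{R}^n \;\Big|\; \sum_{j=1}^n a_j x_j^2=1\Big\}.$$ Then there is a tight frame for $\mathbb{R}^n$ consisting of $k$ vectors $u_1,\ldots,u_k\in\mathcal{E}$.
   Context: A finite sequence $\{u_j\}$ in a Hilbert space $\mathcal{H}$ is a frame if there are constants $0<A\le B$ with $A\|x\|^2\le\sum_j|\langle x,u_j\rangle|^2\le B\|x\|^2$ for all $x\in\mathcal{H}$; it is a tight frame if one can take $A=B$ (the common value is the frame bound). *)

From HB Require Import structures.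
From mathcomp Require Import all_boot all_order all_algebra.
From mathcomp Require Import reals.
Set Implicit Arguments. Unset Strict Implicit. Unset Printing Implicit Defensive.
Import Order.TTheory GRing.Theory Num.Theory.
Local Open Scope ring_scope.

Definition dotv (R : realType) (n : nat) (x y : 'rV[R]_n) : R :=
  \sum_(i < n) x 0 i * y 0 i.

Definition is_frame_with (R : realType) (n k : nat) (u : 'I_k -> 'rV[R]_n) (A B : R) : Prop :=
  0 < A /\ A <= B /\
  forall x : 'rV[R]_n,
    A * dotv x x <= \sum_(j < k) `|dotv x (u j)| ^+ 2 /\
    \sum_(j < k) `|dotv x (u j)| ^+ 2 <= B * dotv x x.

Definition tight_frame (R : realType) (n k : nat) (u : 'I_k -> 'rV[R]_n) : Prop :=
  exists A : R, is_frame_with u A A.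

Definition ellipsoid (R : realType) (n : nat) (a : 'I_n -> R) (x : 'rV[R]_n) : Prop :=
  \sum_(j < n) a j * x 0 j ^+ 2 = 1.

From HB Require Import structures.
From mathcomp Require Import all_boot all_order all_algebra.
From mathcomp Require Import reals.
From mathcomp Require Import ring lra.
Import Order.TTheory GRing.Theory Num.Theory.
Set Implicit Arguments.
Unset Strict Implicit.
Unset Printing Implicit Defensive.

Local Open Scope ring_scope.

(* Start from the standard basis of R^n padded with k - n zero vectors: a tight
   frame whose quadratic values q(u_j) = sum_l a_l u_{j,l}^2 add up to r.
   A plane rotation of two frame vectors u_i, u_j keeps the frame tight and the
   sum q(u_i) + q(u_j) unchanged; if q(u_i) - m and q(u_j) - m have opposite
   signs (m = r / k), the rotation angle can be chosen so that the new u_i has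
   q-value exactly m.  Since the q(u_j) - m sum to zero, such a partner j exists
   as long as some q(u_i) differs from m, so finitely many rotations make all
   q-values equal to m, and rescaling by 1 / sqrt m lands on the ellipsoid. *)

Section Rotations.
Variable R : realType.

(* The point (c, s) = (sqrt d - y, x - m), with d = y^2 - (x - m)(z - m) > 0,
   is a nonzero root of (x - m) c^2 + 2 y c s + (z - m) s^2; normalise it. *)
Lemma binary_form_level_on_circle (x y z m : R) : (x - m) * (z - m) < 0 ->
  exists c s : R, c ^+ 2 + s ^+ 2 = 1 /\ c ^+ 2 * x + 2 * c * s * y + s ^+ 2 * z = m.
Proof.
move=> hxz; set d := y ^+ 2 - (x - m) * (z - m).
have sqrt_dK : Num.sqrt d ^+ 2 = d by rewrite sqr_sqrtr // /d; nra.
set c0 := Num.sqrt d - y; set s0 := x - m.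
have s0_neq0 : s0 != 0 by apply: contraTneq hxz => s00; rewrite -/s0 s00 mul0r ltxx.
set N := c0 ^+ 2 + s0 ^+ 2.
have N_gt0 : 0 < N by rewrite /N ltr_wpDl ?sqr_ge0 // exprn_even_gt0.
have root0 : s0 * c0 ^+ 2 + 2 * y * c0 * s0 + (z - m) * s0 ^+ 2 = 0.
  rewrite -[RHS](mulr0 s0) -(subrr d) -{1}sqrt_dK /c0 /d /s0; ring.
have sqrt_NK : Num.sqrt N ^+ 2 = N by rewrite sqr_sqrtr // ltW.
have sqrt_N_neq0 : Num.sqrt N != 0 by rewrite gt_eqF // sqrtr_gt0.
exists (c0 / Num.sqrt N), (s0 / Num.sqrt N); split.
  by rewrite !expr_div_n sqrt_NK -mulrDl divff // gt_eqF.
apply: (@mulfI _ N); first by rewrite gt_eqF.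
have -> : N * ((c0 / Num.sqrt N) ^+ 2 * x + 2 * (c0 / Num.sqrt N) * (s0 / Num.sqrt N) * y
    + (s0 / Num.sqrt N) ^+ 2 * z)
  = N / Num.sqrt N ^+ 2 * (c0 ^+ 2 * x + 2 * c0 * s0 * y + s0 ^+ 2 * z) by field.
rewrite sqrt_NK divff ?gt_eqF // mul1r.
apply/eqP; rewrite -subr_eq0 -root0 /N /s0; apply/eqP; ring.
Qed.

Lemma sum_eq0_opposite_sign (I : finType) (f : I -> R) (i : I) :
  \sum_l f l = 0 -> f i != 0 -> exists j, f i * f j < 0.
Proof.
move=> sum_f0 fi_neq0; apply/existsP; apply: contraT; rewrite negb_exists => /forallP fi_f.
have : \sum_l f i * f l = f i * f i + \sum_(l | l != i) f i * f l by rewrite (bigD1 i).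
rewrite -mulr_sumr sum_f0 mulr0.
have : 0 < f i * f i by rewrite -expr2 exprn_even_gt0.
have : 0 <= \sum_(l | l != i) f i * f l by apply: sumr_ge0 => l _; rewrite leNgt fi_f.
lra.
Qed.

Definition is_quadratic (V : lmodType R) (F : V -> R) :=
  exists G : V -> V -> R, forall c s p q,
    F (c *: p + s *: q) = c ^+ 2 * F p + 2 * c * s * G p q + s ^+ 2 * F q.

Lemma quadratic_rotation_pair (V : lmodType R) (F : V -> R) c s p q :
  is_quadratic F -> c ^+ 2 + s ^+ 2 = 1 ->
  F (c *: p + s *: q) + F (- s *: p + c *: q) = F p + F q.
Proof.
move=> [G FE] cs1; rewrite !FE; transitivity ((c ^+ 2 + s ^+ 2) * (F p + F q)); first ring.
by rewrite cs1 mul1r.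
Qed.

Definition rotate (V : lmodType R) k (u : 'I_k -> V) (i j : 'I_k) (c s : R) :
    'I_k -> V := fun l =>
  if l == i then c *: u i + s *: u j
  else if l == j then - s *: u i + c *: u j else u l.

Lemma sum_rotate (V : lmodType R) k (F : V -> R) (u : 'I_k -> V) i j c s :
  i != j -> is_quadratic F -> c ^+ 2 + s ^+ 2 = 1 ->
  \sum_l F (rotate u i j c s l) = \sum_l F (u l).
Proof.
move=> ij F_quad cs1; have ji : j != i by rewrite eq_sym.
have split2 (G : 'I_k -> R) :
    \sum_l G l = G i + G j + \sum_(l | (l != i) && (l != j)) G l.
  by rewrite (bigD1 i) // (bigD1 j) //= addrA.
rewrite [LHS]split2 [RHS]split2 /rotate eqxx (negbTE ji) eqxx quadratic_rotation_pair //.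
congr (_ + _); apply: eq_bigr => l /andP[/negbTE -> /negbTE ->] //.
Qed.

End Rotations.

Section Frames.
Variables (R : realType) (n : nat).
Implicit Types (x p q : 'rV[R]_n) (a : 'I_n -> R).

Definition bform a p q := \sum_l a l * (p 0 l * q 0 l).

Definition tight_with k (u : 'I_k -> 'rV[R]_n) (A : R) :=
  forall x, \sum_j dotv x (u j) ^+ 2 = A * dotv x x.

Lemma dotvDZ x c d p q : dotv x (c *: p + d *: q) = c * dotv x p + d * dotv x q.
Proof.
rewrite /dotv !mulr_sumr -big_split; apply: eq_bigr => l _; rewrite !mxE /=; ring.
Qed.

Lemma dotv_sqr_quadratic x : is_quadratic (fun p => dotv x p ^+ 2).
Proof.
by exists (fun p q => dotv x p * dotv x q) => c s p q; rewrite dotvDZ; ring.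
Qed.

Lemma bformDZ a c s p q :
  bform a (c *: p + s *: q) (c *: p + s *: q)
  = c ^+ 2 * bform a p p + 2 * c * s * bform a p q + s ^+ 2 * bform a q q.
Proof.
rewrite /bform !mulr_sumr -!big_split; apply: eq_bigr => l _; rewrite !mxE /=; ring.
Qed.

Lemma bform_quadratic a : is_quadratic (fun p => bform a p p).
Proof. by exists (bform a); exact: bformDZ. Qed.

Lemma bformZ a c p : bform a (c *: p) (c *: p) = c ^+ 2 * bform a p p.
Proof. by rewrite -[c *: p]addr0 -(scale0r p) bformDZ; ring. Qed.

Lemma ellipsoidE a p : ellipsoid a p <-> bform a p p = 1.
Proof. by rewrite /ellipsoid /bform; under eq_bigr do rewrite expr2. Qed.

Lemma tight_with_rotate k (u : 'I_k -> 'rV[R]_n) A i j c s :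
  i != j -> c ^+ 2 + s ^+ 2 = 1 -> tight_with u A -> tight_with (rotate u i j c s) A.
Proof.
move=> ij cs1 uA x.
by rewrite (sum_rotate (F := fun p => dotv x p ^+ 2)) ?uA //; exact: dotv_sqr_quadratic.
Qed.

Lemma tight_withZ k (u : 'I_k -> 'rV[R]_n) A c :
  tight_with u A -> tight_with (fun j => c *: u j) (c ^+ 2 * A).
Proof.
move=> uA x; rewrite -mulrA -uA mulr_sumr; apply: eq_bigr => j _.
by rewrite -[c *: u j]addr0 -(scale0r (u j)) dotvDZ; ring.
Qed.

Lemma tight_with_tight_frame k (u : 'I_k -> 'rV[R]_n) A :
  0 < A -> tight_with u A -> tight_frame u.
Proof.
move=> A_gt0 uA; exists A; do 2!split => //.
by move=> x; under eq_bigr do rewrite real_normK ?num_real //; rewrite uA lexx.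
Qed.

Lemma dotv_delta x j : dotv x (delta_mx 0 j) = x 0 j.
Proof.
rewrite /dotv (bigD1 j) //= big1 => [|l lj]; first by rewrite !mxE !eqxx mulr1 addr0.
by rewrite !mxE (negbTE lj) andbF mulr0.
Qed.

Lemma bform_delta a j : bform a (delta_mx 0 j) (delta_mx 0 j) = a j.
Proof.
rewrite /bform (bigD1 j) //= big1 => [|l lj]; first by rewrite !mxE !eqxx !mulr1 addr0.
by rewrite !mxE (negbTE lj) andbF mul0r mulr0.
Qed.

Definition padded_basis k : 'I_k -> 'rV[R]_n := fun j => \row_l ((l : nat) == j)%:R.
Arguments padded_basis : clear implicits.

Lemma sum_padded_basis k (F : 'rV[R]_n -> R) : (n <= k)%N -> F 0 = 0 ->
  \sum_(j < k) F (padded_basis k j) = \sum_(j < n) F (delta_mx 0 j).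
Proof.
move=> nk F0; set G := fun j : nat => F (\row_(l < n) ((l : nat) == j)%:R).
have -> : \sum_(j < n) F (delta_mx 0 j) = \sum_(j < n) G j.
  by apply: eq_bigr => j _; congr F; apply/rowP => l; rewrite !mxE.
rewrite (big_ord_widen _ _ nk) [RHS]big_mkcond /=; apply: eq_bigr => j _.
case: ltnP => // nj; rewrite /padded_basis -F0; congr F; apply/rowP => l.
by rewrite !mxE; case: eqP => // lj; move: (ltn_ord l); rewrite lj ltnNge nj.
Qed.

Lemma tight_with_padded_basis k : (n <= k)%N -> tight_with (padded_basis k) 1.
Proof.
move=> nk x; rewrite mul1r (sum_padded_basis (F := fun p => dotv x p ^+ 2)) //.
  by apply: eq_bigr => j _; rewrite dotv_delta expr2.
by rewrite /dotv big1 ?expr0n // => l _; rewrite mxE mulr0.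
Qed.

Lemma sum_bform_padded_basis k a : (n <= k)%N ->
  \sum_(j < k) bform a (padded_basis k j) (padded_basis k j) = \sum_j a j.
Proof.
move=> nk; rewrite (sum_padded_basis (F := fun p => bform a p p)) //.
  by apply: eq_bigr => j _; rewrite bform_delta.
by rewrite /bform big1 // => l _; rewrite mxE !mul0r mulr0.
Qed.

End Frames.
Arguments padded_basis {R} n k.

Section Leveling.
Variables (R : realType) (n k : nat) (a : 'I_n -> R) (m : R).
Implicit Types (u : 'I_k -> 'rV[R]_n) (A : R).

Let q (p : 'rV[R]_n) := bform a p p.

Definition off_level u := [set l | q (u l) != m].

Lemma rotate_onto_level u A i :
  tight_with u A -> \sum_l q (u l) = k%:R * m -> q (u i) != m ->
  exists u', [/\ tight_with u' A, \sum_l q (u' l) = k%:R * m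
                 & (#|off_level u'| < #|off_level u|)%N].
Proof.
move=> uA sum_q qi.
have [j ij_opp] : exists j, (q (u i) - m) * (q (u j) - m) < 0.
  apply: sum_eq0_opposite_sign; last by rewrite subr_eq0.
  by rewrite sumrB sum_q sumr_const card_ord mulr_natl subrr.
have ij : i != j by apply: contraTneq ij_opp => <-; rewrite -expr2 -leNgt sqr_ge0.
have [c [s [cs1 qi_m]]] := binary_form_level_on_circle (bform a (u i) (u j)) ij_opp.
have pair := quadratic_rotation_pair (u i) (u j) (bform_quadratic a) cs1.
have q_rot l : q (rotate u i j c s l) =
    if l == i then m else if l == j then q (u i) + q (u j) - m else q (u l).
  rewrite /rotate; have [_ | _] := eqVneq l i; first by rewrite /q bformDZ -qi_m.
  have [_ | _] // := eqVneq l j; move: pair; rewrite /q bformDZ qi_m; lra.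
exists (rotate u i j c s); split.
- exact: tight_with_rotate.
- by rewrite (sum_rotate (F := q)) //; exact: bform_quadratic.
- apply/proper_card/properP; split; last by exists i; rewrite !inE ?q_rot ?eqxx.
  apply/subsetP => l; rewrite !inE q_rot.
  have [_ | _] := eqVneq l i; first by rewrite eqxx.
  have [-> | _] // := eqVneq l j; move=> _.
  by apply: contraTneq ij_opp => ->; rewrite subrr mulr0 ltxx.
Qed.

Lemma tight_frame_onto_level u A :
  tight_with u A -> \sum_l q (u l) = k%:R * m ->
  exists u', tight_with u' A /\ forall l, q (u' l) = m.
Proof.
have [N] := ubnP #|off_level u|; elim: N u => // N IH u off_N uA sum_q.
have [i qi | all_m] := pickP [pred l | q (u l) != m]; last first.
  by exists u; split => // l; apply/eqP; move: (all_m l) => /= /negbFE.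
have [u' [u'A sum_q' off']] := rotate_onto_level uA sum_q qi.
exact: IH (leq_trans off' off_N) u'A sum_q'.
Qed.

End Leveling.

Theorem theorem1 (R : realType) (n k : nat) (a : 'I_n -> R)
  (hnk : (n <= k)%N)
  (ha : forall j, 0 <= a j)
  (hr : 0 < \sum_(j < n) a j) :
  exists u : 'I_k -> 'rV[R]_n,
    (forall j, ellipsoid a (u j)) /\ tight_frame u.
Proof.
have k_gt0 : (0 < k)%N.
  case: n a ha hr hnk => [a _|n' _ _ _]; last exact: leq_ltn_trans (leq0n n').
  by rewrite big1 ?ltxx // => -[].
set m := (\sum_j a j) / k%:R.
have m_gt0 : 0 < m by rewrite divr_gt0 ?ltr0n.
have sum_q : \sum_l bform a (padded_basis n k l) (padded_basis n k l) = k%:R * m.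
  by rewrite sum_bform_padded_basis // mulrC divfK // pnatr_eq0 -lt0n.
have [u [u1 qu]] := tight_frame_onto_level (tight_with_padded_basis hnk) sum_q.
set lam := (Num.sqrt m)^-1.
have lam2m : lam ^+ 2 * m = 1 by rewrite exprVn sqr_sqrtr ?mulVf ?gt_eqF // ltW.
exists (fun j => lam *: u j); split.
  by move=> j; apply/ellipsoidE; rewrite bformZ qu.
apply: (tight_with_tight_frame _ (tight_withZ lam u1)).
by rewrite mulr1 exprn_gt0 // invr_gt0 sqrtr_gt0.
Qed.
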